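(* Assume that the radius distribution $f(r)=\mathbb{P}(R\ge r)$ is a slowly varying function. Then $f(n)T_n\Longrightarrow\mathrm{Exp}(1)$ in distribution as $n\to\infty$, where $\mathbb{P}(\mathrm{Exp}(1)<t)=1-e^{-t}$.
   Context: Covering process: $R$ takes values in $\{1,2,\dots\}$, $f(r)=\mathbb{P}(R\ge r)$ for real $r\ge1$. On $\mathbb{Z}/n\mathbb{Z}$, let $(R_k)$ be i.i.d. copies of $R$, $(U_k)$ i.i.d. uniform on $\mathbb{Z}/n\mathbb{Z}$, independent; $\mathcal{O}_k=\{U_k,\dots,U_k+R_k-1\}$ (mod $n$), $C_0=\emptyset$, $C_k=C_{k-1}\cup\mathcal{O}_k$; with an independent rate-one Poisson process $N(t)$, $X_t=C_{N(t)}$ and $T_n=\inf\{t:X_t=\mathbb{Z}/n\mathbb{Z}\}$. A measurable $U:\mathbb{R}_+\to\mathbb{R}_+$ is regularly varying with index $p$ ($U\in\mathrm{RV}_p$) if $\lim_{x\to\infty}U(xt)/U(x)=t^p$ for all $t>0$; slowly varying means $\mathrm{RV}_0$. *)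

From HB Require Import structures.
From mathcomp Require Import all_boot all_order all_algebra.
From mathcomp Require Import all_classical all_reals all_analysis.
Set Implicit Arguments. Unset Strict Implicit. Unset Printing Implicit Defensive.
Import Order.TTheory GRing.Theory Num.Theory.
Import numFieldNormedType.Exports.
Local Open Scope classical_set_scope.
Local Open Scope ring_scope.

Section CoverDefs.
Variable R : realType.

(* p k = P(R = k): the law of the radius R, a probability on {1,2,...}. *)
Definition radius_pmf (p : nat -> R) : Prop :=
  [/\ p 0%N = 0, (forall k, 0 <= p k) & series p @ \oo --> (1 : R)].

Definition Rtail (p : nat -> R) (x : R) : R :=
  limn (series (fun k => if x <= k%:R then p k else 0)).

Definition regularly_varying (U : R -> R) (a : R) : Prop :=
  [/\ measurable_fun [set x : R | 0 <= x] U,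
      (forall x, 0 <= x -> 0 <= U x) &
      forall t : R, 0 < t -> (U (x * t) / U x) @[x --> +oo] --> t `^ a].

Definition slowly_varying (U : R -> R) : Prop := regularly_varying U 0.

Definition arc (n : nat) (u : 'I_n) (r : nat) : {set 'I_n} :=
  [set x : 'I_n | [exists i : 'I_r, (val x == (val u + val i) %% n)%N]].

(* Law of min(R, n): index j : 'I_n stands for radius j+1; radius n stands
   for the event R >= n (any radius >= n covers the whole cycle). *)
Definition trunc_weight (p : nat -> R) (n : nat) (j : 'I_n) : R :=
  if (j.+1 < n)%N then p j.+1 else Rtail p n%:R.

(* P(C_k = Z/nZ): U_1..U_k uniform on 'I_n, radii i.i.d., all independent. *)
Definition cover_prob (p : nat -> R) (n k : nat) : R :=
  \sum_(u : {ffun 'I_k -> 'I_n})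
   \sum_(r : {ffun 'I_k -> 'I_n})
     (\prod_(i < k) (n%:R^-1 * trunc_weight p (r i))) *
     (if \big[@finset.setU _/finset.set0]_(i < k) arc (u i) (r i).+1 == finset.setTfor 'I_n then 1 else 0).

(* P(T_n <= s) = P(X_s = Z/nZ) = P(C_{N(s)} = Z/nZ), N Poisson of rate 1,
   independent of the covering sequence. *)
Definition cdf_T (p : nat -> R) (n : nat) (s : R) : R :=
  if s < 0 then 0 else
  limn (series (fun k => expR (- s) * s ^+ k / (k`!)%:R * cover_prob p n k)).

Definition cdf_scaled_T (p : nat -> R) (n : nat) (c t : R) : R :=
  if 0 < c then cdf_T p n (t / c) else (if 0 <= t then 1 else 0).

(* CDF of Exp(1): P(Exp(1) <= t) = P(Exp(1) < t). *)
Definition exp1_cdf (t : R) : R := if 0 <= t then 1 - expR (- t) else 0.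

End CoverDefs.

From Pilot Require Import Defs.
From HB Require Import structures.
From mathcomp Require Import all_boot all_order all_algebra.
From mathcomp Require Import all_classical all_reals all_analysis.
From mathcomp Require Import ring lra zify.
Import Order.TTheory GRing.Theory Num.Theory.
Import numFieldNormedType.Exports.
Local Open Scope classical_set_scope.
Local Open Scope ring_scope.
Set Implicit Arguments. Unset Strict Implicit. Unset Printing Implicit Defensive.

(* Write f(n) = P(R >= n) and h(n) = E[R; R < n].  After k arcs the cycle is
   covered as soon as one radius reaches n, and only if the point 0 is covered;
   a single arc covers 0 with probability at most f(n) + h(n)/n.  Hence
     1 - (1 - f(n))^k <= P(C_k = Z/nZ) <= 1 - (1 - f(n) - h(n)/n)^k,
   and Poissonisation gives, at time s = t / f(n),
     1 - e^(-t) <= P(f(n) T_n <= t) <= 1 - e^(-t (1 + h(n) / (n f(n)))).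
   Slow variation makes h(n) = o(n f(n)): iterating
   h(n) <= h(n/2) + n (f(n/2) - f(n)) with f(n/2) <= (1 + eta) f(n)
   contracts the ratio h(n) / (n f(n)) by a factor 3/4 up to an error eta. *)

Section RadiusLaw.
Variables (R : realType) (p : nat -> R).
Hypothesis p_ge0 : forall k, 0 <= p k.
Hypothesis p_sum1 : series p @ \oo --> (1 : R).

Lemma is_cvg_series_radius : cvgn (series p).
Proof. by apply/cvg_ex; exists 1. Qed.

Lemma Rtail_nat m : Rtail p m%:R = 1 - series p m.
Proof.
rewrite /Rtail; apply: cvg_lim => //.
apply: (cvg_trans _ (cvgB p_sum1 (cvg_cst (series p m)))).
apply: near_eq_cvg; near=> N.
have mN : (m <= N)%N by near: N; exact: nbhs_infty_ge.
change (\sum_(0 <= k < N) p k - \sum_(0 <= k < m) p k =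
  \sum_(0 <= k < N) (if m%:R <= k%:R :> R then p k else 0)).
rewrite (big_cat_nat (leq0n m) mN) /= [in RHS](big_cat_nat (leq0n m) mN) /=.
rewrite [X in _ = X + _]big_nat_cond [X in _ = X + _]big1 ?add0r; last first.
  by move=> k /andP[/andP[_ km] _]; rewrite ler_nat leqNgt km.
rewrite addrAC subrr add0r; apply: eq_big_nat => k /andP[mk _].
by rewrite ler_nat mk.
Unshelve. all: by end_near. Qed.

Lemma is_cvg_Rtail_series (x : R) :
  cvgn (series (fun k => if x <= k%:R then p k else 0)).
Proof.
by apply: (series_le_cvg _ p_ge0 _ is_cvg_series_radius) => k; case: ifP.
Qed.

Lemma Rtail_ge0 (x : R) : 0 <= Rtail p x.
Proof.
apply: limr_ge; first exact: is_cvg_Rtail_series.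
by near=> N; apply: sumr_ge0 => k _; case: ifP.
Unshelve. all: by end_near. Qed.

Lemma Rtail_antitone : {homo Rtail p : x y / x <= y >-> y <= x}.
Proof.
move=> x y xy; apply: lim_series_le; try exact: is_cvg_Rtail_series.
move=> k; case: ifP => yk; first by rewrite (le_trans xy yk).
by case: ifP.
Qed.

Lemma Rtail_natB m n : (m <= n)%N ->
  Rtail p m%:R - Rtail p n%:R = \sum_(m <= k < n) p k.
Proof.
move=> mn; rewrite !Rtail_nat /series /= (big_cat_nat (leq0n m) mn) /=.
by ring.
Qed.

Definition partial_mean n := \sum_(r < n) r%:R * p r.

Lemma partial_mean_ge0 n : 0 <= partial_mean n.
Proof. by apply: sumr_ge0 => r _; rewrite mulr_ge0. Qed.

Lemma partial_mean_le m n : (m <= n)%N ->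
  partial_mean n <= partial_mean m + n%:R * (Rtail p m%:R - Rtail p n%:R).
Proof.
move=> mn; rewrite Rtail_natB // /partial_mean.
rewrite -!(big_mkord xpredT (fun r => r%:R * p r)) (big_cat_nat (leq0n m) mn) /=.
rewrite lerD2l mulr_sumr; apply: ler_sum_nat => r /andP[_ rn].
by rewrite ler_wpM2r // ler_nat ltnW.
Qed.

End RadiusLaw.

Section IndependentTrials.
Variables (R : numDomainType) (T1 T2 : finType) (G : T1 -> T2 -> R).

Lemma sum_ffun2_prod k (F : T1 -> T2 -> R) :
  \sum_(u : {ffun 'I_k -> T1}) \sum_(r : {ffun 'I_k -> T2})
     \prod_(i < k) F (u i) (r i) = (\sum_x \sum_j F x j) ^+ k.
Proof.
transitivity (\sum_(u : {ffun 'I_k -> T1}) \prod_(i < k) \sum_j F (u i) j).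
  by apply: eq_bigr => u _; rewrite bigA_distr_bigA.
by rewrite -[k in RHS]card_ord -prodr_const bigA_distr_bigA.
Qed.

Definition trial_prob k (E : {ffun 'I_k -> T1} -> {ffun 'I_k -> T2} -> bool) : R :=
  \sum_(u : {ffun 'I_k -> T1}) \sum_(r : {ffun 'I_k -> T2})
     (\prod_(i < k) G (u i) (r i)) * (if E u r then 1 else 0).

Definition hit_prob (A : T1 -> T2 -> bool) : R :=
  \sum_x \sum_j G x j * (if A x j then 1 else 0).

Lemma trial_prob_exists k A :
  trial_prob (fun u r => [exists i : 'I_k, A (u i) (r i)]) =
  (\sum_x \sum_j G x j) ^+ k - (\sum_x \sum_j G x j - hit_prob A) ^+ k.
Proof.
have -> : \sum_x \sum_j G x j - hit_prob A =
    \sum_x \sum_j G x j * (if A x j then 0 else 1).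
  rewrite -sumrB; apply: eq_bigr => x _; rewrite -sumrB; apply: eq_bigr => j _.
  by case: (A x j); rewrite ?mulr1 ?mulr0 ?subrr ?subr0.
rewrite -!sum_ffun2_prod -sumrB; apply: eq_bigr => u _.
rewrite -sumrB; apply: eq_bigr => r _.
case: (boolP [exists i, _]) => [/existsP[i Ai] | /existsPn notA].
  by rewrite [X in _ - X](bigD1 i) //= Ai mulr0 mul0r subr0 mulr1.
rewrite mulr0; under [X in _ - X]eq_bigr => i _ do rewrite (negbTE (notA i)) mulr1.
by rewrite subrr.
Qed.

Lemma trial_prob_le k (E E' : {ffun 'I_k -> T1} -> {ffun 'I_k -> T2} -> bool) :
  (forall x j, 0 <= G x j) -> (forall u r, E u r -> E' u r) ->
  trial_prob E <= trial_prob E'.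
Proof.
move=> G_ge0 EE'; apply: ler_sum => u _; apply: ler_sum => r _.
rewrite ler_wpM2l ?prodr_ge0 //; case: (boolP (E u r)) => [/EE' -> //|_].
by case: (E' u r); rewrite ?ler01.
Qed.

End IndependentTrials.

Lemma arc_full n (u : 'I_n.+1) : Defs.arc u n.+1 = [set: 'I_n.+1]%SET.
Proof.
apply/setP => x; rewrite !inE; apply/existsP.
have lt : ((x + n.+1 - u) %% n.+1 < n.+1)%N by rewrite ltn_pmod.
exists (Ordinal lt) => /=.
rewrite modnDmr addnBA; last by rewrite (leq_trans (ltnW (ltn_ord u))) // leq_addl.
by rewrite addnC addnK modnDr modn_small.
Qed.

Lemma card_arc_mem n (x : 'I_n) m :
  (#|[pred u : 'I_n | x \in Defs.arc u m]| <= m)%N.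
Proof.
rewrite -sum1_card.
apply: (@leq_trans (\sum_(u : 'I_n) \sum_(i < m) (x == (u + i) %% n :> nat))%N).
  rewrite big_mkcond /=; apply: leq_sum => u _; rewrite !inE.
  by case: existsP => [[i hi]|//]; rewrite (bigD1 i) //= hi.
rewrite exchange_big /= -[m in (_ <= m)%N]card_ord -sum1_card.
apply: leq_sum => i _.
rewrite (eq_bigr (fun u : 'I_n => if x == (u + i) %% n :> nat then 1 else 0)%N);
  last by move=> u _; case: eqP.
rewrite -big_mkcond sum1_card /=; apply/card_le1_eqP => u v.
rewrite !unfold_in /= => /eqP xu /eqP xv; apply: ord_inj.
rewrite -(modn_small (ltn_ord u)) -(modn_small (ltn_ord v)).
by apply/eqP; rewrite -(eqn_modDr i) -xu -xv.
Qed.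

Section Cover.
Variables (R : realType) (p : nat -> R).
Hypothesis p0 : p 0%N = 0.
Hypothesis p_ge0 : forall k, 0 <= p k.
Hypothesis p_sum1 : series p @ \oo --> (1 : R).
Variable n' : nat.
Local Notation n := n'.+1.

Lemma trunc_weight_ge0 (j : 'I_n) : 0 <= trunc_weight p j.
Proof. by rewrite /trunc_weight; case: ifP => _; [exact: p_ge0 | exact: Rtail_ge0]. Qed.

Lemma trunc_weight_sum : \sum_(j < n) trunc_weight p j = 1.
Proof.
rewrite big_ord_recr /= /trunc_weight /= ltnn (Rtail_nat p_sum1).
under eq_bigr => j _ do rewrite /= ltnS ltn_ord.
rewrite seriesEord /= big_ord_recl p0 add0r.
under [X in 1 - X]eq_bigr do rewrite lift0.
by rewrite addrC subrK.
Qed.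

Definition arc_law (x j : 'I_n) : R := n%:R^-1 * trunc_weight p j.

Lemma arc_law_ge0 x j : 0 <= arc_law x j.
Proof. by rewrite mulr_ge0 ?invr_ge0 ?ler0n ?trunc_weight_ge0. Qed.

Lemma arc_law_mass : \sum_x \sum_j arc_law x j = 1.
Proof.
under eq_bigr do rewrite -mulr_sumr trunc_weight_sum mulr1.
by rewrite sumr_const card_ord -[_ *+ n]mulr_natr mulVf ?pnatr_eq0.
Qed.

Definition covers k (u r : {ffun 'I_k -> 'I_n}) : bool :=
  (\bigcup_(i < k) Defs.arc (u i) (r i).+1 == [set: 'I_n])%SET.

Lemma cover_probE k : cover_prob p n k = trial_prob arc_law (@covers k).
Proof. by []. Qed.

Lemma hit_prob_radius_max :
  hit_prob arc_law (fun _ j => j == ord_max) = Rtail p n%:R.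
Proof.
transitivity (\sum_(x : 'I_n) arc_law x ord_max).
  apply: eq_bigr => x _; rewrite (bigD1 ord_max) //= eqxx mulr1 big1 ?addr0 //.
  by move=> j /negbTE ->; rewrite mulr0.
rewrite sumr_const card_ord /arc_law /trunc_weight /= ltnn.
by rewrite -[_ *+ n]mulr_natl mulrA mulfV ?mul1r ?pnatr_eq0.
Qed.

Lemma hit_prob_arc0_le :
  hit_prob arc_law (fun x j => ord0 \in Defs.arc x j.+1) <=
  Rtail p n%:R + partial_mean p n / n%:R.
Proof.
have -> : Rtail p n%:R + partial_mean p n / n%:R =
    \sum_(j < n) n%:R^-1 * trunc_weight p j * j.+1%:R.
  rewrite big_ord_recr /= /trunc_weight /= ltnn mulrAC mulVf ?pnatr_eq0 // mul1r.
  rewrite addrC /partial_mean big_ord_recl mul0r add0r mulr_suml; congr (_ + _).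
  by apply: eq_bigr => j _; rewrite lift0 /= ltnS ltn_ord; ring.
rewrite /hit_prob exchange_big /=; apply: ler_sum => j _.
rewrite /arc_law -mulr_sumr ler_wpM2l ?arc_law_ge0 //.
by rewrite -big_mkcond /= sumr_const ler_nat card_arc_mem.
Qed.

Lemma cover_prob_bounds k :
  1 - (1 - Rtail p n%:R) ^+ k <= cover_prob p n k <=
  1 - (1 - hit_prob arc_law (fun x j => ord0 \in Defs.arc x j.+1)) ^+ k.
Proof.
have := trial_prob_exists arc_law k (fun _ j => j == ord_max).
rewrite arc_law_mass expr1n hit_prob_radius_max => <-.
have := trial_prob_exists arc_law k (fun x j => ord0 \in Defs.arc x j.+1).
rewrite arc_law_mass expr1n => <-.
rewrite cover_probE; apply/andP; split; apply: trial_prob_le; try exact: arc_law_ge0.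
  move=> u r /existsP[i /eqP ri]; rewrite /covers -finset.subTset.
  apply/fintype.subsetP => x _; apply/bigcupP; exists i => //.
  by rewrite ri arc_full inE.
move=> u r /eqP cov; have : ord0 \in [set: 'I_n]%SET by rewrite inE.
by rewrite -cov => /bigcupP[i _ hi]; apply/existsP; exists i.
Qed.

End Cover.

Lemma lim_series_sandwich (R : realType) (lo x hi : R ^nat) :
  (forall k, lo k <= x k <= hi k) -> cvgn (series lo) -> cvgn (series hi) ->
  limn (series lo) <= limn (series x) <= limn (series hi).
Proof.
move=> lxh clo chi.
have cx : cvgn (series x).
  rewrite -[x](subrK lo); apply: is_cvg_seriesD => //.
  apply: (series_le_cvg (v_ := hi - lo)) => [k|k|k|]; rewrite ?fctE.
  - by have /andP[lx _] := lxh k; rewrite subr_ge0.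
  - by have /andP[lx xh] := lxh k; rewrite subr_ge0 (le_trans lx).
  - by have /andP[_ xh] := lxh k; rewrite lerD2r.
  - exact: is_cvg_seriesB.
by apply/andP; split; apply: lim_series_le => // k; have /andP[] := lxh k.
Qed.

Lemma cvg_series_poisson_hit (R : realType) (s a : R) :
  series (fun k => expR (- s) * s ^+ k / k`!%:R * (1 - (1 - a) ^+ k)) @ \oo -->
  1 - expR (- (s * a)).
Proof.
have -> : series (fun k => expR (- s) * s ^+ k / k`!%:R * (1 - (1 - a) ^+ k)) =
    (fun N => expR (- s) * series (exp_coeff s) N -
              expR (- s) * series (exp_coeff (s * (1 - a))) N).
  apply/funext => N; rewrite /series /= !mulr_sumr -sumrB.
  by apply: eq_bigr => k _; rewrite /exp_coeff /= exprMn; ring.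
have -> : 1 - expR (- (s * a)) = expR (- s) * expR s - expR (- s) * expR (s * (1 - a)).
  by rewrite -!expRD addNr expR0; congr (1 - expR _); ring.
by apply: cvgB; apply: cvgM; try exact: cvg_cst; exact: is_cvg_series_exp_coeff.
Qed.

Lemma poisson_mixture_bounds (R : realType) (s a b : R) (c : nat -> R) :
  0 <= s -> (forall k, 1 - (1 - a) ^+ k <= c k <= 1 - (1 - b) ^+ k) ->
  1 - expR (- (s * a)) <= limn (series (fun k => expR (- s) * s ^+ k / k`!%:R * c k))
  <= 1 - expR (- (s * b)).
Proof.
move=> s0 c_bounds.
have w0 k : 0 <= expR (- s) * s ^+ k / k`!%:R.
  by rewrite mulr_ge0 ?mulr_ge0 ?expR_ge0 ?exprn_ge0 ?invr_ge0 ?ler0n.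
rewrite -(cvg_lim _ (@cvg_series_poisson_hit _ s a)) //.
rewrite -(cvg_lim _ (@cvg_series_poisson_hit _ s b)) //.
apply: lim_series_sandwich => [k||].
- by have /andP[lo hi] := c_bounds k; rewrite !ler_wpM2l.
- by apply/cvg_ex; eexists; exact: cvg_series_poisson_hit.
- by apply/cvg_ex; eexists; exact: cvg_series_poisson_hit.
Qed.

Section CoverCdf.
Variables (R : realType) (p : nat -> R).
Hypothesis p0 : p 0%N = 0.
Hypothesis p_ge0 : forall k, 0 <= p k.
Hypothesis p_sum1 : series p @ \oo --> (1 : R).

Lemma cdf_T_bounds n s : (0 < n)%N -> 0 <= s ->
  1 - expR (- (s * Rtail p n%:R)) <= cdf_T p n s <=
  1 - expR (- (s * (Rtail p n%:R + partial_mean p n / n%:R))).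
Proof.
case: n => // n' _ s0; rewrite /cdf_T ltNge s0 /=.
have /andP[-> hi] := poisson_mixture_bounds s0 (cover_prob_bounds p0 p_ge0 p_sum1 n').
apply: le_trans hi _; rewrite lerD2l lerN2 ler_expR lerN2 ler_wpM2l //.
exact: hit_prob_arc0_le.
Qed.

Lemma cdf_scaled_T_bounds n t : (0 < n)%N -> 0 < Rtail p n%:R -> 0 <= t ->
  1 - expR (- t) <= cdf_scaled_T p n (Rtail p n%:R) t <=
  1 - expR (- (t * (1 + partial_mean p n / (n%:R * Rtail p n%:R)))).
Proof.
move=> n0 f0 t0; rewrite /cdf_scaled_T f0.
have := cdf_T_bounds n0 (divr_ge0 t0 (ltW f0)).
rewrite divfK ?gt_eqF //.
have -> // : t / Rtail p n%:R * (Rtail p n%:R + partial_mean p n / n%:R) =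
    t * (1 + partial_mean p n / (n%:R * Rtail p n%:R)).
by field; rewrite !gt_eqF ?ltr0n.
Qed.

End CoverCdf.

Lemma doubling_step (R : realFieldType) (C eta hm hn fm fn m n : R) :
  0 <= C -> 0 <= eta <= 1/2 -> 0 <= m -> 2 * m <= n -> 0 <= fm -> 0 <= fn ->
  fm <= (1 + eta) * fn -> hm <= C * (m * fm) -> hn <= hm + n * (fm - fn) ->
  hn <= (3/4 * C + eta) * (n * fn).
Proof.
move=> C0 /andP[eta0 eta_half] m0 mn fm0 fn0 fmn hmC hnh.
have n0 : 0 <= n by apply: le_trans mn; rewrite mulr_ge0.
have m_fm : m * fm <= 3/4 * (n * fn).
  apply: (le_trans (ler_pM m0 fm0 (lexx m) fmn)).
  have : m * ((1 + eta) * fn) <= (n / 2) * ((1 + eta) * fn).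
    by apply: ler_wpM2r; [rewrite mulr_ge0 // addr_ge0 | lra].
  move/le_trans; apply.
  have -> : n / 2 * ((1 + eta) * fn) = (1 + eta) / 2 * (n * fn) by ring.
  by apply: ler_wpM2r; [rewrite mulr_ge0 | lra].
have n_df : n * (fm - fn) <= eta * (n * fn).
  by rewrite mulrCA ler_wpM2l //; lra.
have := ler_wpM2l C0 m_fm; have : 0 <= n * fn by rewrite mulr_ge0.
nra.
Qed.

Section DoublingRecursion.
Variables (R : realFieldType) (h f : nat -> R) (eta B : R) (N : nat).
Hypothesis N_gt0 : (0 < N)%N.
Hypothesis eta_ge0 : 0 <= eta <= 1/2.
Hypothesis B_ge0 : 0 <= B.
Hypothesis f_ge0 : forall n, 0 <= f n.
Hypothesis f_half : forall n, (N <= n)%N -> f (n %/ 2)%N <= (1 + eta) * f n.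
Hypothesis h_step : forall m n, (m <= n)%N -> h n <= h m + n%:R * (f m - f n).
Hypothesis h_base : forall n, (N <= n < 2 * N)%N -> h n <= B * (n%:R * f n).

Lemma doubling_bound j n : (2 ^ j * N <= n)%N ->
  h n <= ((3/4) ^+ j * B + 4 * eta) * (n%:R * f n).
Proof.
elim/ltn_ind: n j => n IH j jn.
have nf_ge0 : 0 <= n%:R * f n by rewrite mulr_ge0.
have Nn : (N <= n)%N by apply: leq_trans jn; rewrite leq_pmull // expn_gt0.
have [n_small|n_large] := ltnP n (2 * N).
  have -> : j = 0%N.
    case: j jn => // j; rewrite expnS -mulnA => jn.
    suff : (2 * N <= 2 * (2 ^ j * N))%N by lia.
    by rewrite leq_mul2l leq_pmull // expn_gt0.
  rewrite expr0 mul1r; apply: (le_trans (h_base _)); first by rewrite Nn.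
  by rewrite ler_wpM2r // lerDl; case/andP: eta_ge0 => *; lra.
have half_lt : (n %/ 2 < n)%N by lia.
have jm : (2 ^ j.-1 * N <= n %/ 2)%N.
  case: j jn => [|j] /=; first lia.
  by rewrite expnS -mulnA; set M := (2 ^ j * N)%N; lia.
have C_ge0 : 0 <= (3/4) ^+ j.-1 * B + 4 * eta.
  by case/andP: eta_ge0 => *; rewrite addr_ge0 ?mulr_ge0 ?exprn_ge0 //; lra.
have two_half : 2 * (n %/ 2)%:R <= n%:R :> R by rewrite -natrM ler_nat; lia.
apply: (le_trans (doubling_step C_ge0 eta_ge0 (ler0n _ _) two_half (f_ge0 _)
  (f_ge0 _) (f_half Nn) (IH _ half_lt _ jm) (h_step (ltnW half_lt)))).
rewrite ler_wpM2r //; case/andP: eta_ge0 => *.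
case: j {jn jm C_ge0} => [|j] /=; rewrite ?expr0 ?mul1r.
  by have := B_ge0; lra.
by rewrite exprS -[_ * _ * B]mulrA; set X := _ ^+ j * B; lra.
Qed.

End DoublingRecursion.

Lemma doubling_base_bound (R : realFieldType) (h f : nat -> R) M n :
  (forall n, 0 <= f n) -> {homo f : m n / (m <= n)%N >-> n <= m} -> h 0%N = 0 ->
  (forall m n, (m <= n)%N -> h n <= h m + n%:R * (f m - f n)) ->
  0 < f M -> (n <= M)%N -> h n <= f 0%N / f M * (n%:R * f n).
Proof.
move=> f_ge0 f_anti h0 h_step fM nM.
have := h_step 0%N n isT; rewrite h0 add0r => /le_trans; apply.
apply: (@le_trans _ _ (n%:R * f 0%N)); first by rewrite ler_wpM2l // lerBlDr lerDl.
rewrite mulrCA ler_wpM2l // mulrAC ler_pdivlMr // ler_wpM2l //.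
exact: f_anti.
Qed.

Lemma doubling_eventually_small (R : realType) (h f : nat -> R) :
  (forall n, 0 <= f n) -> {homo f : m n / (m <= n)%N >-> n <= m} -> h 0%N = 0 ->
  (forall m n, (m <= n)%N -> h n <= h m + n%:R * (f m - f n)) ->
  (\forall n \near \oo, 0 < f n) ->
  (forall eta, 0 < eta -> \forall n \near \oo, f (n %/ 2)%N <= (1 + eta) * f n) ->
  forall eps, 0 < eps -> \forall n \near \oo, h n <= eps * (n%:R * f n).
Proof.
move=> f_ge0 f_anti h0 h_step f_pos f_half eps eps0.
pose eta := Num.min (1/2) (eps / 8).
have eta_gt0 : 0 < eta by rewrite lt_min; apply/andP; split; lra.
have eta_small : 0 <= eta <= 1/2 by rewrite ltW //= ge_min lexx.
have eta_eps : eta <= eps / 8 by rewrite ge_min lexx orbT.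
have [N0 _ N0_good] : \forall n \near \oo,
    0 < f n /\ f (n %/ 2)%N <= (1 + eta) * f n.
  exact: filterS2 f_pos (f_half _ eta_gt0).
pose N := maxn N0 1.
have f2N : 0 < f (2 * N)%N by case: (N0_good (2 * N)%N) => //=; lia.
pose B := f 0%N / f (2 * N)%N.
have B_ge0 : 0 <= B by rewrite divr_ge0 // ltW.
have h_base n : (N <= n < 2 * N)%N -> h n <= B * (n%:R * f n).
  by case/andP => _ /ltnW; exact: doubling_base_bound.
have f_half_N n : (N <= n)%N -> f (n %/ 2)%N <= (1 + eta) * f n.
  by move=> Nn; case: (N0_good n) => //=; lia.
have N_gt0 : (0 < N)%N by rewrite leq_maxr.
have bound := doubling_bound N_gt0 eta_small B_ge0 f_ge0 f_half_N h_step h_base.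
have geometric0 : ((3/4 : R) ^+ j * B) @[j --> \oo] --> 0.
  rewrite -(mul0r B); apply: cvgM; last exact: cvg_cst.
  by apply: cvg_expr; rewrite ger0_norm; lra.
have [|J _ J_small] := cvgr0_norm_le _ geometric0 (eps / 2); first lra.
have {}J_small := le_trans (ler_norm _) (J_small J (leqnn J)).
near=> n; apply: le_trans (bound J n _) _; first by near: n; exact: nbhs_infty_ge.
by rewrite ler_wpM2r ?mulr_ge0 //; lra.
Unshelve. all: by end_near. Qed.

Section SlowVariation.
Variables (R : realType) (p : nat -> R).
Hypothesis p_ge0 : forall k, 0 <= p k.
Hypothesis p_sum1 : series p @ \oo --> (1 : R).
Hypothesis p_sv : slowly_varying (Rtail p).

Lemma Rtail_third_ratio_cvg :
  (Rtail p (n%:R / 3) / Rtail p n%:R) @[n --> \oo] --> (1 : R).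
Proof.
case: p_sv => _ _ /(_ 3^-1); rewrite invr_gt0 ltr0n powRr0 => /(_ isT).
exact: cvg_comp cvgr_idn.
Qed.

Lemma Rtail_gt0_near : \forall n \near \oo, 0 < Rtail p n%:R.
Proof.
have /cvgrPdist_lt /(_ _ ltr01) := Rtail_third_ratio_cvg.
apply: filterS => n ratio; rewrite lt_neqAle (Rtail_ge0 p_ge0 p_sum1) andbT.
by apply: contraTneq ratio => f0; rewrite -f0 invr0 mulr0 subr0 normr1 ltxx.
Qed.

(* [n %/ 2] may lie below [n / 2]; comparing with [n / 3] instead keeps the
   monotonicity of the tail in the right direction. *)
Lemma Rtail_half_le_near eta : 0 < eta ->
  \forall n \near \oo, Rtail p (n %/ 2)%N%:R <= (1 + eta) * Rtail p n%:R.
Proof.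
move=> eta0; have /cvgrPdist_lt /(_ _ eta0) ratio_near := Rtail_third_ratio_cvg.
near=> n.
have fn0 : 0 < Rtail p n%:R by near: n; exact: Rtail_gt0_near.
apply: (@le_trans _ _ (Rtail p (n%:R / 3))).
  apply: Rtail_antitone => //; rewrite ler_pdivrMr ?ltr0n // -natrM ler_nat.
  have : (2 <= n)%N by near: n; exact: nbhs_infty_ge.
  lia.
rewrite -ler_pdivrMr //.
have : `|1 - Rtail p (n%:R / 3) / Rtail p n%:R| < eta by near: n.
by rewrite ltr_norml => /andP[lo _]; lra.
Unshelve. all: by end_near. Qed.

Lemma partial_mean_ratio_cvg0 :
  (partial_mean p n / (n%:R * Rtail p n%:R)) @[n --> \oo] --> (0 : R).
Proof.
have f_anti : {homo (fun n => Rtail p n%:R) : m n / (m <= n)%N >-> n <= m}.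
  by move=> m n mn; apply: Rtail_antitone => //; rewrite ler_nat.
have pm0 : partial_mean p 0 = 0 by rewrite /partial_mean big_ord0.
apply/cvgrPdist_le => eps eps0.
have small := doubling_eventually_small (fun n => Rtail_ge0 p_ge0 p_sum1 n%:R)
  f_anti pm0 (partial_mean_le p_ge0 p_sum1) Rtail_gt0_near
  Rtail_half_le_near eps0.
near=> n.
have fn0 : 0 < Rtail p n%:R by near: n; exact: Rtail_gt0_near.
have n0 : (0 < n)%N by near: n; exact: nbhs_infty_gt.
rewrite sub0r normrN ger0_norm; last first.
  by rewrite divr_ge0 ?mulr_ge0 ?(partial_mean_ge0 p_ge0) ?(ltW fn0).
by rewrite ler_pdivrMr ?mulr_gt0 ?ltr0n //; near: n.
Unshelve. all: by end_near. Qed.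

End SlowVariation.

Theorem theoremD (R : realType) (p : nat -> R) :
  radius_pmf p -> slowly_varying (Rtail p) ->
  forall t : R,
    cdf_scaled_T p n (Rtail p n%:R) t @[n --> \oo] --> exp1_cdf t.
Proof.
case=> p0 p_ge0 p_sum1 p_sv t.
have f_pos := Rtail_gt0_near p_ge0 p_sum1 p_sv.
have [t_neg|t_ge0] := ltrP t 0.
  rewrite /exp1_cdf leNgt t_neg /=; apply: cvg_near_cst; near=> n.
  have fn0 : 0 < Rtail p n%:R by near: n.
  by rewrite /cdf_scaled_T fn0 /cdf_T pmulr_llt0 ?invr_gt0 // t_neg.
rewrite /exp1_cdf t_ge0.
have delta0 := partial_mean_ratio_cvg0 p_ge0 p_sum1 p_sv.
apply: (squeeze_cvgr (f := fun=> 1 - expR (- t))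
  (h := fun n => 1 - expR (- (t * (1 + partial_mean p n / (n%:R * Rtail p n%:R)))))).
- near=> n; apply: cdf_scaled_T_bounds => //.
  + by near: n; exact: nbhs_infty_gt.
  + by near: n; exact: f_pos.
- exact: cvg_cst.
- apply: cvgB; first exact: cvg_cst.
  apply: continuous_cvg; first exact: continuous_expR.
  have := cvgN (cvgM (cvg_cst t) (cvgD (cvg_cst (1 : R)) delta0)).
  by rewrite addr0 mulr1; apply.
Unshelve. all: by end_near. Qed.
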